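(* There are uncountably many minor-closed classes $\mathcal{C}$ of countable graphs that have a universal element, and uncountably many minor-closed classes of countable graphs that do not have a universal element.
   Context: Graphs may be infinite (countable). A graph $H$ is a minor of a graph $G$ if there are pairwise disjoint connected subgraphs $B_v\subseteq G$, $v\in V(H)$, and for every edge $uv\in E(H)$ an edge of $G$ with one endvertex in $B_u$ and the other in $B_v$. A class $\mathcal{C}$ is minor-closed if every minor of a member of $\mathcal{C}$ is in $\mathcal{C}$. A universal element of $\mathcal{C}$ is a graph $U\in\mathcal{C}$ such that every $G\in\mathcal{C}$ is a minor of $U$. *)

(** A countable graph: vertex set a subset of nat (this covers every
    finite or countably infinite graph up to isomorphism), with a
    symmetric irreflexive adjacency relation between vertices. *)
Record cgraph := CGraph {
  vert : nat -> Prop;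
  adj : nat -> nat -> Prop;
  adj_sym : forall x y, adj x y -> adj y x;
  adj_irrefl : forall x, ~ adj x x;
  adj_vert : forall x y, adj x y -> vert x /\ vert y
}.

Inductive walk (G : cgraph) (S : nat -> Prop) : nat -> nat -> Prop :=
| walk_nil : forall x, S x -> walk G S x x
| walk_cons : forall x z y, S x -> adj G x z -> walk G S z y -> walk G S x y.

Definition connected_in (G : cgraph) (S : nat -> Prop) : Prop :=
  (forall x, S x -> vert G x) /\
  (exists x, S x) /\
  (forall x y, S x -> S y -> walk G S x y).

Definition minor (H G : cgraph) : Prop :=
  exists B : nat -> nat -> Prop,
    (forall v, vert H v -> connected_in G (B v)) /\
    (forall u v, vert H u -> vert H v -> u <> v ->
       forall x, B u x -> B v x -> False) /\
    (forall u v, adj H u v -> exists x y, B u x /\ B v y /\ adj G x y).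

Definition minor_closed (C : cgraph -> Prop) : Prop :=
  forall G H, C G -> minor H G -> C H.

Definition has_universal (C : cgraph -> Prop) : Prop :=
  exists U, C U /\ forall G, C G -> minor G U.

Definition uncountably_many (P : (cgraph -> Prop) -> Prop) : Prop :=
  ~ exists f : nat -> (cgraph -> Prop),
      forall C, P C -> exists n, forall G, f n G <-> C G.

From Stdlib Require Import Arith Wf_nat Lia List Classical ClassicalEpsilon Cantor.
Import ListNotations.

(* A well-founded countably branching tree t is turned into a graph: the tree
   itself, after every subtree has been duplicated so that each child occurs
   at least twice.  If graph(t) is a minor of graph(s), then t embeds into s:
   the branch set of a child either has its topmost vertex strictly below the
   top of the branch set of the parent, or it contains the parent of that top,
   and of two equal siblings only one can do the latter.  No tree embeds into a
   proper subtree of itself, so graph(t) is not a minor of graph(d) for a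
   proper subtree d of t.

   Any countable family of trees has a strict upper bound (a new root above
   them all), so a diagonal argument makes the classes of minors of graph(t)
   -- closed, with universal element graph(t) -- uncountably many.  Along the
   tower t, Node (const t), Node (const (Node (const t))), ... no graph is a
   minor of its predecessor, so the union of their minor classes is
   minor-closed without a universal element, and the same diagonal argument
   applies. *)

Lemma walk_start G S x y : walk G S x y -> S x.
Proof. now destruct 1. Qed.

Lemma walk_mono G (S S' : nat -> Prop) x y :
  (forall z, S z -> S' z) -> walk G S x y -> walk G S' x y.
Proof. intros HS; induction 1; econstructor; eauto. Qed.

Lemma walk_app G S x y z : walk G S x y -> walk G S y z -> walk G S x z.
Proof. induction 1; intros; auto. econstructor; eauto. Qed.

Lemma minor_refl G : minor G G.
Proof.
  exists (fun v x => x = v /\ vert G v). split; [|split].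
  - intros v Hv. split; [|split].
    + now intros x [-> _].
    + now exists v.
    + intros x y [-> _] [-> _]. now constructor.
  - intros u v _ _ Huv x [-> _] [-> _]. now apply Huv.
  - intros u v Huv. exists u, v. destruct (adj_vert G u v Huv). auto.
Qed.

Lemma connected_in_bigcup G K (S : nat -> Prop) (C : nat -> nat -> Prop) :
  connected_in G S ->
  (forall x, S x -> connected_in K (C x)) ->
  (forall x z, adj G x z -> exists p q, C x p /\ C z q /\ adj K p q) ->
  connected_in K (fun y => exists x, S x /\ C x y).
Proof.
  intros (_ & [x0 Hx0] & HS) HC Hedge. split; [|split].
  - intros y [x [Hx Hy]]. now apply (HC x Hx).
  - destruct (HC x0 Hx0) as (_ & [y0 Hy0] & _). eauto.
  - intros y1 y2 [x1 [Hx1 Hy1]] [x2 [Hx2 Hy2]].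
    revert y1 Hy1. induction (HS x1 x2 Hx1 Hx2) as [x Hx | x z x' Hx Hxz Hw IH];
      intros y1 Hy1.
    + destruct (HC x Hx) as (_ & _ & Cw).
      apply (walk_mono _ (C x)); eauto.
    + destruct (Hedge x z Hxz) as [p [q [Hp [Hq Hpq]]]].
      destruct (HC x Hx) as (_ & _ & Cw).
      apply walk_app with p.
      * apply (walk_mono _ (C x)); eauto.
      * econstructor; eauto. apply IH; auto. eapply walk_start; eauto.
Qed.

Lemma minor_trans H G K : minor H G -> minor G K -> minor H K.
Proof.
  intros [B [Bc [Bd Be]]] [C [Cc [Cd Ce]]].
  exists (fun v y => exists x, B v x /\ C x y). split; [|split].
  - intros v Hv. apply connected_in_bigcup with G; auto.
    intros x Hx. apply Cc, (Bc v Hv), Hx.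
  - intros u v Hu Hv Huv y [x1 [H1 Hy1]] [x2 [H2 Hy2]].
    destruct (Nat.eq_dec x1 x2) as [<-|E].
    + eapply Bd; eauto.
    + apply (Cd x1 x2) with y; auto; [apply (Bc u Hu) | apply (Bc v Hv)]; auto.
  - intros u v Huv. destruct (Be u v Huv) as [x [y [Bx [By Hxy]]]].
    destruct (Ce x y Hxy) as [p [q [Cp [Cq Hpq]]]]. exists p, q. split; [|split]; eauto.
Qed.

Definition minors_of (U : cgraph) : cgraph -> Prop := fun G => minor G U.

Lemma minors_of_minor_closed U : minor_closed (minors_of U).
Proof. intros G H HG HH. eapply minor_trans; eauto. Qed.

Lemma minors_of_has_universal U : has_universal (minors_of U).
Proof. exists U. split; [apply minor_refl | auto]. Qed.

Definition minors_of_chain (Us : nat -> cgraph) : cgraph -> Prop :=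
  fun G => exists n, minor G (Us n).

Lemma minors_of_chain_minor_closed Us : minor_closed (minors_of_chain Us).
Proof. intros G H [n HG] HH. exists n. eapply minor_trans; eauto. Qed.

Lemma minors_of_chain_no_universal Us :
  (forall n, ~ minor (Us (S n)) (Us n)) -> ~ has_universal (minors_of_chain Us).
Proof.
  intros Hstrict [U [[n HU] Huniv]].
  apply (Hstrict n), minor_trans with U; auto.
  apply Huniv. exists (S n). apply minor_refl.
Qed.

Lemma uncountably_many_diagonal {X : Type} (x0 : X) (lt : X -> X -> Prop)
    (F : X -> cgraph -> Prop) (P : (cgraph -> Prop) -> Prop) :
  (forall x, P (F x)) ->
  (forall alpha : nat -> X, exists beta, forall n, lt (alpha n) beta) ->
  (forall x y, lt x y -> exists G, F y G /\ ~ F x G) ->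
  uncountably_many P.
Proof.
  intros HP Hbound Hsep [f Hf].
  pose (alpha n := epsilon (inhabits x0) (fun x => forall G, f n G <-> F x G)).
  destruct (Hbound alpha) as [beta Hbeta].
  destruct (Hf (F beta) (HP beta)) as [m Hm].
  assert (Hfm : forall G, f m G <-> F (alpha m) G).
  { apply (epsilon_spec (inhabits x0) (fun x => forall G, f m G <-> F x G)).
    now exists beta. }
  destruct (Hsep _ _ (Hbeta m)) as [G [HG HnG]].
  now apply HnG, Hfm, Hm.
Qed.

Inductive tree : Type := Leaf : tree | Node : (nat -> tree) -> tree.

Inductive desc : tree -> tree -> Prop :=
| desc_refl s : desc s s
| desc_child f j u : desc (f j) u -> desc (Node f) u.

Definition proper_desc (t d : tree) : Prop := exists f j, t = Node f /\ desc (f j) d.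

Lemma desc_trans a b c : desc a b -> desc b c -> desc a c.
Proof. induction 1; intros; auto. econstructor; eauto. Qed.

Lemma desc_node_child x f j : desc x (Node f) -> desc x (f j).
Proof.
  intros H. apply desc_trans with (Node f); auto.
  apply (desc_child _ j), desc_refl.
Qed.

Lemma proper_desc_node_child x f j : desc x (Node f) -> proper_desc x (f j).
Proof.
  inversion 1 as [s Hs | g k u Hu]; subst.
  - exists f, j. split; [reflexivity | constructor].
  - exists g, k. split; [reflexivity | now apply desc_node_child].
Qed.

Fixpoint embeds (t s : tree) : Prop :=
  match t with
  | Leaf => True
  | Node f => exists g, desc s (Node g) /\ forall i, exists j, embeds (f i) (g j)
  end.

Lemma embeds_desc t s s' : desc s s' -> embeds t s' -> embeds t s.
Proof.
  destruct t as [|f]; simpl; auto.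
  intros Hd [g [Hg H]]. exists g. split; auto. eapply desc_trans; eauto.
Qed.

Lemma not_embeds_proper_desc t d : proper_desc t d -> ~ embeds t d.
Proof.
  revert d. induction t as [|f IH]; intros d [g [k [Ht Hd]]]; [discriminate|].
  injection Ht as <-. intros [g [Hdg Hemb]].
  destruct (Hemb k) as [j Hj].
  apply (IH k (g j)); auto.
  apply proper_desc_node_child. eapply desc_trans; eauto.
Qed.

Fixpoint tower (n : nat) (t : tree) : tree :=
  match n with 0 => t | S n => Node (fun _ => tower n t) end.

Lemma proper_desc_tower n t : proper_desc (tower (S n) t) (tower n t).
Proof. exists (fun _ => tower n t), 0. split; [reflexivity | constructor]. Qed.

Fixpoint double (t : tree) : tree :=
  match t with
  | Leaf => Leaf
  | Node f => Node (fun n => double (f (fst (Cantor.of_nat n))))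
  end.

Inductive doubled : tree -> Prop :=
| doubled_leaf : doubled Leaf
| doubled_node f : (forall i, doubled (f i)) ->
    (forall i, exists i', i' <> i /\ f i' = f i) -> doubled (Node f).

Lemma doubled_double t : doubled (double t).
Proof.
  induction t as [|f IH]; simpl; constructor; auto.
  intros i. destruct (Cantor.of_nat i) as [j k] eqn:Ei.
  exists (Cantor.to_nat (j, S k)). rewrite Cantor.cancel_of_to. split; auto.
  intros E. apply (f_equal Cantor.of_nat) in E.
  rewrite Cantor.cancel_of_to, Ei in E. injection E. lia.
Qed.

Lemma desc_double x y : desc x y -> desc (double x) (double y).
Proof.
  induction 1 as [|f j u _ IH]; simpl; [constructor|].
  apply (desc_child _ (Cantor.to_nat (j, 0))). now rewrite Cantor.cancel_of_to.
Qed.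

Lemma proper_desc_double t d : proper_desc t d -> proper_desc (double t) (double d).
Proof.
  intros [f [j [-> Hd]]]. simpl.
  eexists; exists (Cantor.to_nat (j, 0)). split; [reflexivity|]. cbv beta.
  rewrite Cantor.cancel_of_to. now apply desc_double.
Qed.

(* An address lists child indices from a node up to the root: [j :: a] is the
   [j]-th child of the node at [a].  The vertices of [tree_graph t] are the
   codes of the addresses of nodes of [t]. *)
Fixpoint subtree (t : tree) (a : list nat) : option tree :=
  match a with
  | [] => Some t
  | j :: a' => match subtree t a' with Some (Node g) => Some (g j) | _ => None end
  end.

Lemma subtree_cons t j a u :
  subtree t (j :: a) = Some u -> exists g, subtree t a = Some (Node g) /\ u = g j.
Proof.
  simpl. destruct (subtree t a) as [[|g]|]; try discriminate.
  injection 1 as <-. eauto.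
Qed.

Lemma subtree_app t q a u :
  subtree t (q ++ a) = Some u -> exists v, subtree t a = Some v /\ desc v u.
Proof.
  revert u. induction q as [|j q IH]; simpl; intros u Hu.
  - exists u. split; [auto | constructor].
  - apply subtree_cons in Hu as [g [Hg ->]].
    destruct (IH _ Hg) as [v [Hv Hd]]. exists v. split; auto.
    now apply desc_node_child.
Qed.

Fixpoint code (a : list nat) : nat :=
  match a with [] => 0 | j :: a' => S (Cantor.to_nat (j, code a')) end.

Fixpoint decode (fuel n : nat) : list nat :=
  match fuel, n with
  | S fuel', S n' => fst (Cantor.of_nat n') :: decode fuel' (snd (Cantor.of_nat n'))
  | _, _ => []
  end.

Definition address (n : nat) : list nat := decode (S n) n.

Lemma decode_code a fuel : code a < fuel -> decode fuel (code a) = a.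
Proof.
  revert fuel. induction a as [|j a IH]; intros [|fuel] Hfuel; cbn [code decode] in *;
    try lia; auto.
  rewrite Cantor.cancel_of_to. f_equal. apply IH.
  pose proof (Cantor.to_nat_non_decreasing j (code a)). lia.
Qed.

Lemma address_code a : address (code a) = a.
Proof. apply decode_code. lia. Qed.

Lemma code_inj a b : code a = code b -> a = b.
Proof. intros E. now rewrite <- (address_code a), <- (address_code b), E. Qed.

Definition is_vertex (t : tree) (x : nat) : Prop :=
  code (address x) = x /\ subtree t (address x) <> None.

Definition tree_adj (t : tree) (x y : nat) : Prop :=
  is_vertex t x /\ is_vertex t y /\
  ((exists j, address x = j :: address y) \/ (exists j, address y = j :: address x)).

Lemma tree_adj_sym t x y : tree_adj t x y -> tree_adj t y x.
Proof. intros (Hx & Hy & [H|H]); (split; [|split]); auto. Qed.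

Lemma tree_adj_irrefl t x : ~ tree_adj t x x.
Proof.
  intros (_ & _ & [[j H]|[j H]]); apply (f_equal (@length nat)) in H; simpl in H; lia.
Qed.

Lemma tree_adj_vert t x y : tree_adj t x y -> is_vertex t x /\ is_vertex t y.
Proof. now intros (Hx & Hy & _). Qed.

Definition tree_graph (t : tree) : cgraph :=
  CGraph (is_vertex t) (tree_adj t) (tree_adj_sym t) (tree_adj_irrefl t) (tree_adj_vert t).

Lemma is_vertex_code t a u : subtree t a = Some u -> is_vertex t (code a).
Proof. intros E. split; rewrite address_code; [reflexivity | now rewrite E]. Qed.

Lemma tree_adj_child t a j u : subtree t (j :: a) = Some u -> tree_adj t (code a) (code (j :: a)).
Proof.
  intros E. destruct (subtree_cons _ _ _ _ E) as [g [Eg _]].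
  split; [|split]; [eapply is_vertex_code; eauto .. |].
  right. exists j. now rewrite !address_code.
Qed.

Lemma is_vertex_inj t x y : is_vertex t x -> is_vertex t y -> address x = address y -> x = y.
Proof. intros [Hx _] [Hy _] E. now rewrite <- Hx, <- Hy, E. Qed.

Definition extends (l a : list nat) : Prop := exists p, l = p ++ a.

Definition top (S : nat -> Prop) (m : nat) : Prop :=
  S m /\ forall x, S x -> length (address m) <= length (address x).

Lemma top_exists (S : nat -> Prop) : (exists x, S x) -> exists m, top S m.
Proof.
  intros [x Hx].
  destruct (dec_inh_nat_subset_has_unique_least_element
              (fun n => exists m, S m /\ length (address m) = n))
    as [n [[[m [Hm <-]] Hleast] _]].
  - intros n. apply classic.
  - eauto.
  - exists m. split; auto. intros y Hy. apply Hleast. eauto.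
Qed.

Section ConnectedSetsOfTreeGraph.

Variable s : tree.

Lemma walk_exits_through_parent S y z :
  walk (tree_graph s) S y z -> forall a, extends (address y) a -> ~ extends (address z) a ->
  exists w j, S w /\ a = j :: address w.
Proof.
  induction 1 as [x Hx | x z' y Hx Hadj Hw IH]; intros a Hy Hz; [contradiction|].
  destruct (classic (extends (address z') a)) as [Hz'|Hz']; [eauto|].
  destruct Hadj as (_ & _ & [[j Hj]|[j Hj]]), Hy as [[|i p] Hp]; simpl in Hp.
  - exists z', j. split; [eapply walk_start; eauto | congruence].
  - exfalso. apply Hz'. exists p. rewrite Hj in Hp. now injection Hp.
  - exfalso. apply Hz'. exists [j]. now rewrite Hj, Hp.
  - exfalso. apply Hz'. exists (j :: i :: p). now rewrite Hj, Hp.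
Qed.

Variable S : nat -> Prop.
Hypothesis S_connected : connected_in (tree_graph s) S.
Variable m : nat.
Hypothesis m_top : top S m.

Lemma connected_extends_top x : S x -> extends (address x) (address m).
Proof.
  intros Hx. destruct (classic (extends (address x) (address m))) as [H|H]; auto.
  destruct S_connected as (_ & _ & Hw), m_top as [Hm Hmin].
  destruct (walk_exits_through_parent S m x (Hw m x Hm Hx) (address m)) as [w [j [Hw' E]]];
    [now exists [] | auto |].
  specialize (Hmin w Hw'). rewrite E in Hmin. simpl in Hmin. lia.
Qed.

Lemma connected_parent_in x : S x -> x <> m -> exists w j, S w /\ address x = j :: address w.
Proof.
  intros Hx Hxm. destruct S_connected as (Hv & _ & Hw), m_top as [Hm _].
  apply (walk_exits_through_parent S x m (Hw x m Hx Hm)); [now exists [] |].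
  intros [p Hp]. destruct (connected_extends_top x Hx) as [q Hq].
  assert (p = []) as ->.
  { apply (f_equal (@length nat)) in Hp, Hq. rewrite length_app in Hp, Hq.
    destruct p; simpl in *; [reflexivity | lia]. }
  apply Hxm, (is_vertex_inj s); [apply Hv; auto .. | now rewrite Hp].
Qed.

End ConnectedSetsOfTreeGraph.

Lemma adjacent_tops s Bv Bc m mc x y :
  connected_in (tree_graph s) Bv -> connected_in (tree_graph s) Bc ->
  (forall z, Bv z -> Bc z -> False) ->
  top Bv m -> top Bc mc -> Bv x -> Bc y -> tree_adj s x y ->
  (exists q j, address mc = q ++ j :: address m) \/
  (exists w j, Bc w /\ address m = j :: address w).
Proof.
  intros Hcv Hcc Hdisj Hm Hmc Hx Hy (Ix & Iy & [[j Hj]|[j Hj]]).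
  - destruct (classic (x = m)) as [<-|Hxm]; [right; eauto|].
    exfalso. destruct (connected_parent_in s Bv Hcv m Hm x Hx Hxm) as [w [j' [Bw Ew]]].
    rewrite Hj in Ew. injection Ew as _ Ew.
    assert (w = y) as -> by (apply (is_vertex_inj s); auto; now apply Hcv).
    eauto.
  - destruct (connected_extends_top s Bv Hcv m Hm x Hx) as [p Hp].
    destruct (classic (extends (address mc) (address m))) as [[q Hq]|Hn].
    + destruct q as [|j' q _] using rev_ind.
      * exfalso. assert (mc = m) as ->.
        { apply (is_vertex_inj s); [apply Hcc, Hmc | apply Hcv, Hm | exact Hq]. }
        apply (Hdisj m); [apply Hm | apply Hmc].
      * left. exists q, j'. now rewrite Hq, <- app_assoc.
    + right. destruct Hcc as (_ & _ & Hwc).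
      apply (walk_exits_through_parent s Bc y mc (Hwc y mc Hy (proj1 Hmc))); auto.
      exists (j :: p). now rewrite Hj, Hp.
Qed.

Section MinorOfTreeGraph.

Variables t s : tree.
Variable B : nat -> nat -> Prop.
Hypothesis B_connected : forall v, is_vertex t v -> connected_in (tree_graph s) (B v).
Hypothesis B_disjoint : forall u v, is_vertex t u -> is_vertex t v -> u <> v ->
  forall x, B u x -> B v x -> False.
Hypothesis B_edge : forall u v, tree_adj t u v -> exists x y, B u x /\ B v y /\ tree_adj s x y.

Lemma child_top_below a f m i i' :
  subtree t a = Some (Node f) -> top (B (code a)) m -> i <> i' ->
  exists c mc, (c = i \/ c = i') /\ top (B (code (c :: a))) mc /\
               exists q j, address mc = q ++ j :: address m.
Proof.
  intros Ha Hm Hii'.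
  assert (Hsub : forall c, subtree t (c :: a) = Some (f c)) by (intros c; simpl; now rewrite Ha).
  assert (Hvc : forall c, is_vertex t (code (c :: a))) by (intros c; eapply is_vertex_code, Hsub).
  assert (Hva : is_vertex t (code a)) by (eapply is_vertex_code; eauto).
  assert (Hcases : forall c mc, top (B (code (c :: a))) mc ->
            (exists q j, address mc = q ++ j :: address m) \/
            (exists w j, B (code (c :: a)) w /\ address m = j :: address w)).
  { intros c mc Hmc.
    destruct (B_edge _ _ (tree_adj_child t a c _ (Hsub c))) as [x [y [Bx [By Hxy]]]].
    apply (adjacent_tops s (B (code a)) _ m mc x y); auto.
    apply (B_disjoint _ _ Hva (Hvc c)).
    intros E%code_inj. apply (f_equal (@length nat)) in E. simpl in E. lia. }
  destruct (top_exists (B (code (i :: a)))) as [m1 Hm1]; [apply B_connected, Hvc|].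
  destruct (top_exists (B (code (i' :: a)))) as [m2 Hm2]; [apply B_connected, Hvc|].
  destruct (Hcases i m1 Hm1) as [H1|[w1 [j1 [Bw1 E1]]]]; [exists i, m1; auto|].
  destruct (Hcases i' m2 Hm2) as [H2|[w2 [j2 [Bw2 E2]]]]; [exists i', m2; auto|].
  exfalso. rewrite E1 in E2. injection E2 as _ E2.
  assert (w1 = w2) as <-.
  { apply (is_vertex_inj s); auto; [apply (B_connected _ (Hvc i)) | apply (B_connected _ (Hvc i'))];
      auto. }
  apply (B_disjoint _ _ (Hvc i) (Hvc i')) with w1; auto.
  intros E%code_inj. now injection E.
Qed.

Lemma top_embeds_subtree u : doubled u -> forall a, subtree t a = Some u ->
  forall m, top (B (code a)) m -> exists su, subtree s (address m) = Some su /\ embeds u su.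
Proof.
  induction u as [|f IH]; intros Hu a Ha m Hm.
  - assert (Hvm : is_vertex s m) by (apply (B_connected _ (is_vertex_code _ _ _ Ha)), Hm).
    destruct (subtree s (address m)) as [su|] eqn:E; [now exists su | now destruct Hvm].
  - inversion Hu as [|? Hf Htwin]; subst.
    assert (Hchild : forall i, exists j y, subtree s (j :: address m) = Some y /\ embeds (f i) y).
    { intros i. destruct (Htwin i) as [i' [Hi' Hfi]].
      destruct (child_top_below a f m i i') as [c [mc [Hc [Hmc [q [j Hq]]]]]]; auto.
      assert (Hfc : f c = f i) by (destruct Hc; subst; auto).
      destruct (IH c (Hf c) (c :: a)) with mc as [smc [Es Hemb]];
        [simpl; now rewrite Ha | auto |].
      rewrite Hq in Es. destruct (subtree_app _ _ _ _ Es) as [y [Hy Hd]].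
      exists j, y. split; auto. rewrite <- Hfc. eapply embeds_desc; eauto. }
    destruct (Hchild 0) as [j0 [y0 [Hy0 _]]].
    destruct (subtree_cons _ _ _ _ Hy0) as [g [Hg _]].
    exists (Node g). split; auto. exists g. split; [constructor|].
    intros i. destruct (Hchild i) as [j [y [Hy Hemb]]]. exists j.
    destruct (subtree_cons _ _ _ _ Hy) as [g' [Hg' ->]].
    rewrite Hg in Hg'. now injection Hg' as <-.
Qed.

End MinorOfTreeGraph.

Lemma minor_tree_graph_embeds t s :
  doubled t -> minor (tree_graph t) (tree_graph s) -> embeds t s.
Proof.
  intros Ht [B [Hc [Hd He]]].
  assert (Hroot : is_vertex t (code [])) by (eapply is_vertex_code; reflexivity).
  destruct (top_exists (B (code []))) as [m Hm]; [apply (Hc _ Hroot)|].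
  destruct (top_embeds_subtree t s B Hc Hd He t Ht [] eq_refl m Hm) as [su [Hsu Hemb]].
  rewrite <- (app_nil_r (address m)) in Hsu.
  destruct (subtree_app _ _ _ _ Hsu) as [y [Hy Hdesc]].
  injection Hy as <-. eapply embeds_desc; eauto.
Qed.

Definition doubled_graph (t : tree) : cgraph := tree_graph (double t).

Lemma not_minor_proper_desc t d : proper_desc t d -> ~ minor (doubled_graph t) (doubled_graph d).
Proof.
  intros Hp Hm. apply (not_embeds_proper_desc (double t) (double d)).
  - now apply proper_desc_double.
  - apply minor_tree_graph_embeds; auto using doubled_double.
Qed.

Theorem theorem1p7 :
  uncountably_many (fun C => minor_closed C /\ has_universal C) /\
  uncountably_many (fun C => minor_closed C /\ ~ has_universal C).
Proof.
  split.
  - apply (uncountably_many_diagonal Leaf (fun a b => proper_desc b a)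
             (fun t => minors_of (doubled_graph t))).
    + intros t. split; [apply minors_of_minor_closed | apply minors_of_has_universal].
    + intros alpha. exists (Node alpha). intros n. exists alpha, n. split; [reflexivity | constructor].
    + intros a b Hab. exists (doubled_graph b).
      split; [apply minor_refl | now apply not_minor_proper_desc].
  - apply (uncountably_many_diagonal Leaf (fun a b => forall k, proper_desc b (tower k a))
             (fun t => minors_of_chain (fun n => doubled_graph (tower n t)))).
    + intros t. split; [apply minors_of_chain_minor_closed | apply minors_of_chain_no_universal].
      intros n. apply not_minor_proper_desc, proper_desc_tower.
    + intros alpha. exists (Node (fun n => Node (fun k => tower k (alpha n)))).
      intros n k. eexists; exists n. split; [reflexivity|].
      apply (desc_child _ k), desc_refl.
    + intros a b Hab. exists (doubled_graph b). split; [exists 0; apply minor_refl|].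
      intros [k Hk]. exact (not_minor_proper_desc _ _ (Hab k) Hk).
Qed.
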